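(* Let $k\ge1$ and $B>0$ with $B\neq2$ be constants and let $F$ be as defined below. For every $(\alpha_L,\alpha_R)\in[0,1]^2$, the iterates $F^{(t)}(\alpha_L,\alpha_R)=F\circ\cdots\circ F(\alpha_L,\alpha_R)$ ($t$ times) converge, as $t\to\infty$, to the unique fixed point of $F$ (which is $(1/2,1/2)$ if $B<2$, and the unique solution in $(1/2,1)^2$ of $\exp(B\sqrt k(1-2\alpha_R))=\frac{1-\alpha_L}{\alpha_L}$, $\exp(\frac{B}{\sqrt k}(1-2\alpha_L))=\frac{1-\alpha_R}{\alpha_R}$ if $B>2$).
   Context: The map $F$: for $(\alpha_L,\alpha_R)\in[0,1]^2$, if $\sqrt{\alpha_L\alpha_R}\,B\le1$ set $(\theta_L,\theta_R)=(0,0)$; otherwise let $(\theta_L,\theta_R)$ be the unique solution with $\theta_L,\theta_R>0$ of $\exp(-B\sqrt k\,\alpha_R\theta_R)=1-\theta_L$ and $\exp(-\frac{B}{\sqrt k}\alpha_L\theta_L)=1-\theta_R$. Then $F(\alpha_L,\alpha_R)=\big(\tfrac12(1+\theta_L\alpha_L),\tfrac12(1+\theta_R\alpha_R)\big)$. *)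

From Stdlib Require Import Reals Lra ClassicalEpsilon.
Open Scope R_scope.

Definition theta_spec (B k aL aR : R) (t : R * R) : Prop :=
  0 < fst t /\ 0 < snd t /\
  exp (- (B * sqrt k * aR * snd t)) = 1 - fst t /\
  exp (- ((B / sqrt k) * aL * fst t)) = 1 - snd t.

Definition theta (B k aL aR : R) : R * R :=
  if Rle_dec (sqrt (aL * aR) * B) 1 then (0, 0)
  else epsilon (inhabits (0, 0)) (theta_spec B k aL aR).

Definition F (B k : R) (a : R * R) : R * R :=
  let t := theta B k (fst a) (snd a) in
  ((1 + fst t * fst a) / 2, (1 + snd t * snd a) / 2).

Definition in_unit_square (a : R * R) : Prop :=
  0 <= fst a <= 1 /\ 0 <= snd a <= 1.


(* With phi z = 1 - exp (-z), the first component of theta solves s = phi (A phi (D s))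
   with A = B sqrt k aR and D = B aL / sqrt k.  As phi is concave with phi 0 = 0,
   s |-> phi (A phi (D s)) / s is decreasing, so this solution grows with (aL, aR):
   F is monotone for the coordinatewise order and maps [0,1]^2 into [1/2,1]^2.  The
   orbits of (1/2, 1/2) and (1, 1) are then monotone, sandwich every other orbit, and
   their limits solve the fixed-point equations.  In x = 2 aL - 1, y = 2 aR - 1 these
   read x = tanh (B sqrt k y / 2), y = tanh (B x / (2 sqrt k)); by the same concavity
   argument for tanh they have no solution in (0,1)^2 when B <= 2 and exactly one when
   B > 2, and in the latter case the lower orbit leaves (1/2, 1/2) at once. *)

From Stdlib Require Import Reals Lra ClassicalEpsilon.
From Coquelicot Require Import Coquelicot.
Open Scope R_scope.

Definition ratio_decreasing (f : R -> R) :=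
  forall x y, 0 < x -> x < y -> x * f y < y * f x.

Definition pos_increasing (f : R -> R) :=
  forall x y, 0 < x -> x < y -> 0 < f x < f y.

Section ConcaveThroughOrigin.

Variables f f' : R -> R.
Hypothesis f_derive : forall x, 0 <= x -> derivable_pt_lim f x (f' x).
Hypothesis f_0 : f 0 = 0.
Hypothesis f'_decreasing : forall x y, 0 <= x -> x < y -> f' y < f' x.
Hypothesis f'_pos : forall x, 0 <= x -> 0 < f' x.

Lemma concave_mvt a b : 0 <= a -> a < b ->
  exists c, f b - f a = f' c * (b - a) /\ a < c < b.
Proof. intros ha hab. apply MVT_cor2; [exact hab |]. intros c hc. apply f_derive; lra. Qed.

Lemma concave_ratio_decreasing : ratio_decreasing f.
Proof.
  intros x y hx hxy.
  destruct (concave_mvt 0 x) as [c1 [e1 h1]]; [lra | exact hx |].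
  destruct (concave_mvt x y) as [c2 [e2 h2]]; [lra | exact hxy |].
  assert (f' c2 < f' c1) by (apply f'_decreasing; lra).
  assert (0 < x * (y - x)) by (apply Rmult_lt_0_compat; lra).
  rewrite f_0 in e1. replace (f y) with (f x + f' c2 * (y - x)) by lra.
  replace (f x) with (f' c1 * x) by lra. nra.
Qed.

Lemma concave_pos_increasing : pos_increasing f.
Proof.
  intros x y hx hxy.
  destruct (concave_mvt 0 x) as [c1 [e1 h1]]; [lra | exact hx |].
  destruct (concave_mvt x y) as [c2 [e2 h2]]; [lra | exact hxy |].
  assert (0 < f' c1) by (apply f'_pos; lra).
  assert (0 < f' c2) by (apply f'_pos; lra).
  rewrite f_0 in e1. split; nra.
Qed.

Lemma concave_lt_slope0 x : 0 < x -> f x < f' 0 * x.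
Proof.
  intros hx. destruct (concave_mvt 0 x) as [c [e h]]; [lra | exact hx |].
  assert (f' c < f' 0) by (apply f'_decreasing; lra).
  rewrite f_0 in e. nra.
Qed.

End ConcaveThroughOrigin.

Lemma ratio_decreasing_comp f g :
  ratio_decreasing f -> pos_increasing f ->
  ratio_decreasing g -> pos_increasing g ->
  ratio_decreasing (fun x => f (g x)).
Proof.
  intros df pf dg pg x y hx hxy.
  destruct (pg x y hx hxy) as [gx gxy].
  specialize (df _ _ gx gxy). specialize (dg x y hx hxy).
  destruct (pf _ _ gx gxy) as [fgx fgxy].
  assert (h : g y * (x * f (g y)) < g y * (y * f (g x))) by nra.
  apply Rmult_lt_reg_l in h; lra.
Qed.

Lemma ratio_decreasing_scale f l :
  0 < l -> ratio_decreasing f -> ratio_decreasing (fun x => f (l * x)).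
Proof.
  intros hl df x y hx hxy.
  assert (h := df (l * x) (l * y) ltac:(nra) ltac:(nra)). nra.
Qed.

Lemma pos_increasing_scale f l :
  0 < l -> pos_increasing f -> pos_increasing (fun x => f (l * x)).
Proof. intros hl pf x y hx hxy. apply pf; nra. Qed.

Lemma ratio_decreasing_fixed_unique f x x' : ratio_decreasing f ->
  0 < x -> 0 < x' -> f x = x -> f x' = x' -> x = x'.
Proof.
  intros df hx hx' e e'.
  destruct (Rtotal_order x x') as [h | [h | h]]; [exfalso | exact h | exfalso].
  - specialize (df x x' hx h). rewrite e, e' in df. lra.
  - specialize (df x' x hx' h). rewrite e, e' in df. lra.
Qed.

Lemma exp_le x y : x <= y -> exp x <= exp y.
Proof. intros [h | ->]; [left; apply exp_increasing, h | right; reflexivity]. Qed.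

Lemma exp_lt_1 x : x < 0 -> exp x < 1.
Proof. intros h. rewrite <- exp_0. apply exp_increasing, h. Qed.

Lemma ratio_decreasing_scaled_twice f A D : 0 < A -> 0 < D ->
  ratio_decreasing f -> pos_increasing f -> ratio_decreasing (fun s => f (A * f (D * s))).
Proof.
  intros hA hD df pf.
  apply (ratio_decreasing_comp (fun z => f (A * z)) (fun s => f (D * s))).
  - exact (ratio_decreasing_scale _ _ hA df).
  - exact (pos_increasing_scale _ _ hA pf).
  - exact (ratio_decreasing_scale _ _ hD df).
  - exact (pos_increasing_scale _ _ hD pf).
Qed.

Definition phi (z : R) := 1 - exp (- z).

Lemma phi_derive x : derivable_pt_lim phi x (exp (- x)).
Proof. apply is_derive_Reals. unfold phi. auto_derive; [exact I | ring]. Qed.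

Lemma phi_0 : phi 0 = 0.
Proof. unfold phi. rewrite Ropp_0, exp_0. ring. Qed.

Lemma exp_neg_decreasing x y : 0 <= x -> x < y -> exp (- y) < exp (- x).
Proof. intros _ hxy. apply exp_increasing. lra. Qed.

Lemma phi_ratio_decreasing : ratio_decreasing phi.
Proof.
  exact (concave_ratio_decreasing phi (fun x => exp (- x))
    (fun x _ => phi_derive x) phi_0 exp_neg_decreasing).
Qed.

Lemma phi_pos_increasing : pos_increasing phi.
Proof.
  exact (concave_pos_increasing phi (fun x => exp (- x))
    (fun x _ => phi_derive x) phi_0 (fun x _ => exp_pos (- x))).
Qed.

Lemma phi_lt_id x : 0 < x -> phi x < x.
Proof.
  intros hx.
  pose proof (concave_lt_slope0 phi (fun x => exp (- x))
    (fun x _ => phi_derive x) phi_0 exp_neg_decreasing x hx) as h; cbv beta in h.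
  rewrite Ropp_0, exp_0 in h. lra.
Qed.

Lemma phi_le x y : x <= y -> phi x <= phi y.
Proof.
  intros h. unfold phi.
  assert (exp (- y) <= exp (- x)) by (apply exp_le; lra). lra.
Qed.

Lemma phi_ge0 x : 0 <= x -> 0 <= phi x.
Proof. intros h. rewrite <- phi_0. apply phi_le, h. Qed.

Lemma phi_lt1 x : phi x < 1.
Proof. unfold phi. pose proof (exp_pos (- x)). lra. Qed.

Lemma phi_pos x : 0 < x -> 0 < phi x.
Proof. intros h. unfold phi. pose proof (exp_lt_1 (- x)). lra. Qed.

Lemma phi_ge_div z : 0 <= z -> z / (1 + z) <= phi z.
Proof.
  intros hz. unfold phi.
  pose proof (exp_ineq1_le z). pose proof (exp_pos (- z)).
  assert (exp (- z) * exp z = 1) by (rewrite <- exp_plus, Rplus_opp_l; apply exp_0).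
  apply Rmult_le_reg_r with (1 + z); [lra |].
  unfold Rdiv. rewrite Rmult_assoc, Rinv_l by lra. nra.
Qed.

Definition tanh_half (z : R) := (exp z - 1) / (exp z + 1).

Lemma tanh_half_derive x :
  derivable_pt_lim tanh_half x (2 * exp x / (exp x + 1) ^ 2).
Proof.
  apply is_derive_Reals. unfold tanh_half.
  pose proof (exp_pos x). auto_derive; [lra | field; lra].
Qed.

Lemma tanh_half_derive_decreasing x y : 0 <= x -> x < y ->
  2 * exp y / (exp y + 1) ^ 2 < 2 * exp x / (exp x + 1) ^ 2.
Proof.
  intros hx hxy.
  assert (1 <= exp x) by (rewrite <- exp_0; apply exp_le; lra).
  assert (exp x < exp y) by (apply exp_increasing; lra).
  set (u := exp x) in *. set (v := exp y) in *.
  apply Rmult_lt_reg_r with ((u + 1) ^ 2 * (v + 1) ^ 2).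
  { apply Rmult_lt_0_compat; apply pow_lt; lra. }
  unfold Rdiv. field_simplify; try lra.
  assert (0 < (v - u) * (u * v - 1)) by (apply Rmult_lt_0_compat; nra). nra.
Qed.

Lemma tanh_half_0 : tanh_half 0 = 0.
Proof. unfold tanh_half. rewrite exp_0. field. Qed.

Lemma tanh_half_derive_pos x : 0 <= x -> 0 < 2 * exp x / (exp x + 1) ^ 2.
Proof.
  intros _. pose proof (exp_pos x).
  apply Rdiv_lt_0_compat; [lra | apply pow_lt; lra].
Qed.

Lemma tanh_half_ratio_decreasing : ratio_decreasing tanh_half.
Proof.
  exact (concave_ratio_decreasing _ _ (fun x _ => tanh_half_derive x) tanh_half_0
    tanh_half_derive_decreasing).
Qed.

Lemma tanh_half_pos_increasing : pos_increasing tanh_half.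
Proof.
  exact (concave_pos_increasing _ _ (fun x _ => tanh_half_derive x) tanh_half_0
    tanh_half_derive_pos).
Qed.

Lemma tanh_half_lt_half x : 0 < x -> tanh_half x < x / 2.
Proof.
  intros hx.
  pose proof (concave_lt_slope0 _ _ (fun x _ => tanh_half_derive x) tanh_half_0
    tanh_half_derive_decreasing x hx) as h; cbv beta in h.
  rewrite exp_0 in h. lra.
Qed.

Lemma div_1_plus_le a b : 0 <= a -> a <= b -> a / (1 + a) <= b / (1 + b).
Proof.
  intros ha hab.
  replace (a / (1 + a)) with (1 - / (1 + a)) by (field; lra).
  replace (b / (1 + b)) with (1 - / (1 + b)) by (field; lra).
  assert (/ (1 + b) <= / (1 + a)) by (apply Rinv_le_contravar; lra). lra.
Qed.

Lemma saturation_solution_le A D A' D' s s' :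
  0 < A -> A <= A' -> 0 < D -> D <= D' -> 0 < s -> 0 < s' ->
  phi (A * phi (D * s)) = s -> phi (A' * phi (D' * s')) = s' -> s <= s'.
Proof.
  intros hA hA' hD hD' hs hs' e e'.
  destruct (Rle_or_lt s s') as [h | h]; [exact h | exfalso].
  pose proof (ratio_decreasing_scaled_twice phi A D hA hD phi_ratio_decreasing
    phi_pos_increasing s' s hs' h) as hr.
  cbv beta in hr. rewrite e in hr.
  assert (s' < phi (A * phi (D * s'))) by nra.
  assert (phi (A * phi (D * s')) <= phi (A' * phi (D' * s'))).
  { apply phi_le.
    assert (phi (D * s') <= phi (D' * s')) by (apply phi_le; nra).
    assert (0 <= phi (D * s')) by (apply phi_ge0; nra). nra. }
  lra.
Qed.

Lemma saturation_solution_threshold A D s : 0 < A -> 0 < D -> 0 < s ->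
  phi (A * phi (D * s)) = s -> 1 < A * D.
Proof.
  intros hA hD hs e.
  assert (phi (D * s) < D * s) by (apply phi_lt_id; nra).
  assert (0 < phi (D * s)) by (apply phi_pos; nra).
  assert (s < A * phi (D * s)) by (rewrite <- e at 1; apply phi_lt_id; nra).
  nra.
Qed.

Lemma saturation_lower_bound A D s : 0 < A -> 0 < D -> 0 <= s ->
  A * D * s / (1 + (D + A * D) * s) <= phi (A * phi (D * s)).
Proof.
  intros hA hD hs.
  assert (hw : D * s / (1 + D * s) <= phi (D * s)) by (apply phi_ge_div; nra).
  assert (0 <= D * s / (1 + D * s)) by (apply Rdiv_le_0_compat; nra).
  assert (0 <= D * s) by nra. assert (0 <= A * D * s) by nra.
  replace (A * D * s / (1 + (D + A * D) * s))
    with (A * (D * s / (1 + D * s)) / (1 + A * (D * s / (1 + D * s)))) by (field; split; lra).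
  apply Rle_trans with (A * phi (D * s) / (1 + A * phi (D * s))).
  - apply div_1_plus_le; nra.
  - apply phi_ge_div. nra.
Qed.

Lemma saturation_solution_exists A D : 0 < A -> 0 < D -> 1 < A * D ->
  exists s, 0 < s /\ phi (A * phi (D * s)) = s.
Proof.
  intros hA hD hAD.
  set (h := fun s => s - phi (A * phi (D * s))).
  assert (hcont : continuity h).
  { intro x. apply continuity_pt_filterlim, (ex_derive_continuous h).
    unfold h, phi. auto_derive. exact I. }
  set (s0 := (A * D - 1) / (2 * (D + A * D))).
  assert (hs0 : (D + A * D) * s0 = (A * D - 1) / 2) by (unfold s0; field; nra).
  assert (0 < s0) by (unfold s0; apply Rdiv_lt_0_compat; nra).
  assert (s0 < 1) by nra.
  assert (h0 : h s0 < 0).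
  { unfold h. pose proof (saturation_lower_bound A D s0 hA hD ltac:(lra)).
    enough (s0 < A * D * s0 / (1 + (D + A * D) * s0)) by lra.
    apply Rmult_lt_reg_r with (1 + (D + A * D) * s0); [lra |].
    unfold Rdiv. rewrite Rmult_assoc, Rinv_l by lra. nra. }
  assert (h1 : 0 < h 1) by (unfold h; pose proof (phi_lt1 (A * phi (D * 1))); lra).
  destruct (IVT h s0 1 hcont ltac:(lra) h0 h1) as [s [hs e]].
  exists s. unfold h in e. split; lra.
Qed.

Definition le2 (a b : R * R) := fst a <= fst b /\ snd a <= snd b.

Definition cv2 (x : nat -> R * R) (p : R * R) :=
  is_lim_seq (fun t => fst (x t)) (fst p) /\ is_lim_seq (fun t => snd (x t)) (snd p).

Lemma le2_refl a : le2 a a.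
Proof. unfold le2. lra. Qed.

Lemma le2_trans a b c : le2 a b -> le2 b c -> le2 a c.
Proof. unfold le2. lra. Qed.

Lemma cv2_increasing (x : nat -> R * R) b :
  (forall t, le2 (x t) (x (S t))) -> (forall t, le2 (x t) b) ->
  exists p, cv2 x p /\ forall t, le2 (x t) p.
Proof.
  intros hinc hb.
  destruct (ex_finite_lim_seq_incr (fun t => fst (x t)) (fst b)) as [l1 h1];
    [intro t; apply hinc | intro t; apply hb |].
  destruct (ex_finite_lim_seq_incr (fun t => snd (x t)) (snd b)) as [l2 h2];
    [intro t; apply hinc | intro t; apply hb |].
  exists (l1, l2). split; [split; assumption |].
  intro t. split;
    [apply (is_lim_seq_incr_compare _ _ h1) | apply (is_lim_seq_incr_compare _ _ h2)];
    intro n; apply hinc.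
Qed.

Lemma cv2_decreasing (x : nat -> R * R) b :
  (forall t, le2 (x (S t)) (x t)) -> (forall t, le2 b (x t)) ->
  exists p, cv2 x p /\ forall t, le2 p (x t).
Proof.
  intros hdec hb.
  destruct (ex_finite_lim_seq_decr (fun t => fst (x t)) (fst b)) as [l1 h1];
    [intro t; apply hdec | intro t; apply hb |].
  destruct (ex_finite_lim_seq_decr (fun t => snd (x t)) (snd b)) as [l2 h2];
    [intro t; apply hdec | intro t; apply hb |].
  exists (l1, l2). split; [split; assumption |].
  intro t. split;
    [apply (is_lim_seq_decr_compare _ _ h1) | apply (is_lim_seq_decr_compare _ _ h2)];
    intro n; apply hdec.
Qed.

Lemma cv2_le (x y : nat -> R * R) p q :
  (forall t, le2 (x t) (y t)) -> cv2 x p -> cv2 y q -> le2 p q.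
Proof.
  intros hxy [hx1 hx2] [hy1 hy2]. split.
  - exact (is_lim_seq_le _ _ _ _ (fun t => proj1 (hxy t)) hx1 hy1).
  - exact (is_lim_seq_le _ _ _ _ (fun t => proj2 (hxy t)) hx2 hy2).
Qed.

Lemma cv2_squeeze (x y z : nat -> R * R) p :
  (forall t, le2 (x t) (y t) /\ le2 (y t) (z t)) -> cv2 x p -> cv2 z p -> cv2 y p.
Proof.
  intros h [hx1 hx2] [hz1 hz2]. unfold le2 in h. split.
  - refine (is_lim_seq_le_le _ _ _ _ _ hx1 hz1). intro t. split; apply h.
  - refine (is_lim_seq_le_le _ _ _ _ _ hx2 hz2). intro t. split; apply h.
Qed.

Section MonotoneIteration.

Variable G : R * R -> R * R.
Variables lo hi : R * R.
Hypothesis lo_le_hi : le2 lo hi.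
Hypothesis G_mono : forall a b, le2 lo a -> le2 a b -> le2 b hi -> le2 (G a) (G b).
Hypothesis G_maps : forall a, le2 lo a -> le2 a hi -> le2 lo (G a) /\ le2 (G a) hi.
Variable P : R * R -> Prop.
Hypothesis P_orbit_limit :
  forall a p, le2 lo a -> le2 a hi -> cv2 (fun t => Nat.iter t G a) p -> P p.

Lemma iter_maps a t : le2 lo a -> le2 a hi ->
  le2 lo (Nat.iter t G a) /\ le2 (Nat.iter t G a) hi.
Proof.
  intros hlo hhi. induction t as [| t [IH1 IH2]]; [split; assumption |].
  exact (G_maps _ IH1 IH2).
Qed.

Lemma iter_mono a b t : le2 lo a -> le2 a b -> le2 b hi ->
  le2 (Nat.iter t G a) (Nat.iter t G b).
Proof.
  intros ha hab hb. induction t as [| t IH]; [exact hab |].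
  apply G_mono; [| exact IH |].
  - exact (proj1 (iter_maps a t ha (le2_trans _ _ _ hab hb))).
  - exact (proj2 (iter_maps b t (le2_trans _ _ _ ha hab) hb)).
Qed.

Lemma lower_orbit_increasing t : le2 (Nat.iter t G lo) (Nat.iter (S t) G lo).
Proof.
  rewrite Nat.iter_succ_r. destruct (G_maps lo (le2_refl lo) lo_le_hi) as [h1 h2].
  apply iter_mono; [apply le2_refl | exact h1 | exact h2].
Qed.

Lemma upper_orbit_decreasing t : le2 (Nat.iter (S t) G hi) (Nat.iter t G hi).
Proof.
  rewrite Nat.iter_succ_r. destruct (G_maps hi lo_le_hi (le2_refl hi)) as [h1 h2].
  apply iter_mono; [exact h1 | exact h2 | apply le2_refl].
Qed.

Lemma orbit_limits : exists l u,
  cv2 (fun t => Nat.iter t G lo) l /\ cv2 (fun t => Nat.iter t G hi) u /\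
  le2 (G lo) l /\ le2 l u /\ le2 u hi /\ P l /\ P u.
Proof.
  destruct (cv2_increasing (fun t => Nat.iter t G lo) hi) as [l [hl hlb]].
  { exact lower_orbit_increasing. }
  { intro t. exact (proj2 (iter_maps lo t (le2_refl lo) lo_le_hi)). }
  destruct (cv2_decreasing (fun t => Nat.iter t G hi) lo) as [u [hu hub]].
  { exact upper_orbit_decreasing. }
  { intro t. exact (proj1 (iter_maps hi t lo_le_hi (le2_refl hi))). }
  exists l, u. split; [exact hl |]. split; [exact hu |].
  split; [exact (hlb 1%nat) |].
  split.
  { apply (cv2_le _ _ _ _ (fun t => iter_mono lo hi t (le2_refl lo) lo_le_hi (le2_refl hi)));
      assumption. }
  split; [exact (hub 0%nat) |].
  split; [exact (P_orbit_limit lo l (le2_refl lo) lo_le_hi hl) |].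
  exact (P_orbit_limit hi u lo_le_hi (le2_refl hi) hu).
Qed.

Lemma iter_cv_of_unique p :
  (forall q, le2 (G lo) q -> le2 q hi -> P q -> q = p) ->
  forall a, le2 lo a -> le2 a hi -> cv2 (fun t => Nat.iter t G a) p.
Proof.
  intros huniq a ha1 ha2.
  destruct orbit_limits as (l & u & hl & hu & hlo & hlu & hhi & Pl & Pu).
  assert (l = p) by (apply huniq; [exact hlo | apply (le2_trans _ u) | ]; assumption).
  assert (u = p) by (apply huniq; [apply (le2_trans _ l) | | ]; assumption).
  subst l u.
  apply (cv2_squeeze _ _ _ _ (fun t => conj (iter_mono lo a t (le2_refl lo) ha1 ha2)
                                      (iter_mono a hi t ha1 ha2 (le2_refl hi))) hl hu).
Qed.

End MonotoneIteration.

Lemma cv2_iter_succ (G : R * R -> R * R) a p :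
  cv2 (fun t => Nat.iter t G (G a)) p -> cv2 (fun t => Nat.iter t G a) p.
Proof.
  intros [h1 h2].
  split; apply is_lim_seq_incr_1;
    [refine (is_lim_seq_ext _ _ _ _ h1) | refine (is_lim_seq_ext _ _ _ _ h2)];
    intro t; rewrite <- Nat.iter_succ_r; reflexivity.
Qed.

Lemma step_eq_limit c (x y : nat -> R) (lx ly : R) :
  is_lim_seq x lx -> is_lim_seq y ly ->
  (forall t, x t * exp (- (c * (2 * y (S t) - 1))) = x t - 2 * x (S t) + 1) ->
  lx * exp (- (c * (2 * ly - 1))) = lx - 2 * lx + 1.
Proof.
  intros hx hy hstep.
  set (g := fun s => exp (- (c * (2 * s - 1)))).
  assert (hg : continuity_pt g ly).
  { apply continuity_pt_filterlim, (ex_derive_continuous g). unfold g. auto_derive. exact I. }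
  assert (hl : is_lim_seq (fun t => x t * g (y (S t))) (lx * g ly)).
  { apply is_lim_seq_mult'; [exact hx |].
    apply (is_lim_seq_continuous g (fun t => y (S t))); [exact hg |].
    apply -> is_lim_seq_incr_1. exact hy. }
  assert (hr : is_lim_seq (fun t => x t * g (y (S t))) (lx - 2 * lx + 1)).
  { apply (is_lim_seq_ext (fun t => x t - 2 * x (S t) + 1)); [intro t; symmetry; apply hstep |].
    apply is_lim_seq_plus'; [| apply is_lim_seq_const].
    apply is_lim_seq_minus'; [exact hx |].
    apply is_lim_seq_mult'; [apply is_lim_seq_const | apply -> is_lim_seq_incr_1; exact hx]. }
  apply is_lim_seq_unique in hl, hr. rewrite hl in hr. injection hr. easy.
Qed.

Lemma upper_square_in_unit a : le2 (1/2, 1/2) a -> le2 a (1, 1) -> in_unit_square a.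
Proof. unfold le2, in_unit_square; simpl. lra. Qed.

Lemma half_le_one : le2 (1/2, 1/2) (1, 1).
Proof. unfold le2; simpl. lra. Qed.

Lemma half_in_unit_square : in_unit_square (1/2, 1/2).
Proof. apply upper_square_in_unit; [apply le2_refl | exact half_le_one]. Qed.

Definition in_upper_open_square (q : R * R) := 1/2 < fst q < 1 /\ 1/2 < snd q < 1.

Section Dynamics.

Variables k B : R.
Hypothesis k_pos : 0 < k.
Hypothesis B_pos : 0 < B.

Lemma B_mul_sqrt_pos : 0 < B * sqrt k.
Proof. apply Rmult_lt_0_compat; [exact B_pos | apply sqrt_lt_R0, k_pos]. Qed.

Lemma B_div_sqrt_pos : 0 < B / sqrt k.
Proof. apply Rdiv_lt_0_compat; [exact B_pos | apply sqrt_lt_R0, k_pos]. Qed.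

Lemma B_mul_div_sqrt : B * sqrt k * (B / sqrt k) = B * B.
Proof. pose proof (sqrt_lt_R0 k k_pos). field. lra. Qed.

Lemma theta_spec_saturation aL aR t : 0 <= aL -> 0 <= aR -> theta_spec B k aL aR t ->
  0 < aL /\ 0 < aR /\ fst t < 1 /\ snd t < 1 /\
  phi (B * sqrt k * aR * phi (B / sqrt k * aL * fst t)) = fst t /\
  phi (B / sqrt k * aL * fst t) = snd t.
Proof.
  intros hL hR (t1 & t2 & e1 & e2).
  pose proof (exp_pos (- (B * sqrt k * aR * snd t))).
  pose proof (exp_pos (- (B / sqrt k * aL * fst t))).
  assert (e2' : phi (B / sqrt k * aL * fst t) = snd t) by (unfold phi; lra).
  assert (aL <> 0) by (intros ->; rewrite Rmult_0_r, Rmult_0_l, Ropp_0, exp_0 in e2; lra).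
  assert (aR <> 0) by (intros ->; rewrite Rmult_0_r, Rmult_0_l, Ropp_0, exp_0 in e1; lra).
  repeat split; try lra.
  rewrite e2'. unfold phi. lra.
Qed.

Lemma theta_threshold_iff aL aR : 0 <= aL -> 0 <= aR ->
  (1 < sqrt (aL * aR) * B <-> 1 < B * sqrt k * aR * (B / sqrt k * aL)).
Proof.
  intros hL hR.
  assert (hsq : B * sqrt k * aR * (B / sqrt k * aL)
                = (sqrt (aL * aR) * B) * (sqrt (aL * aR) * B)).
  { replace (B * sqrt k * aR * (B / sqrt k * aL)) with (B * sqrt k * (B / sqrt k) * (aL * aR))
      by ring.
    rewrite B_mul_div_sqrt, <- (sqrt_sqrt (aL * aR)) at 1 by nra. ring. }
  assert (0 <= sqrt (aL * aR) * B) by (pose proof (sqrt_pos (aL * aR)); nra).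
  rewrite hsq. split; intro; nra.
Qed.

Lemma theta_spec_threshold aL aR t : 0 <= aL -> 0 <= aR ->
  theta_spec B k aL aR t -> 1 < sqrt (aL * aR) * B.
Proof.
  intros hL hR hs.
  destruct (theta_spec_saturation aL aR t hL hR hs) as (hL' & hR' & _ & _ & e & _).
  pose proof B_mul_sqrt_pos. pose proof B_div_sqrt_pos.
  apply theta_threshold_iff; [exact hL | exact hR |].
  apply (saturation_solution_threshold _ _ (fst t)); [nra | nra | apply hs | exact e].
Qed.

Lemma theta_spec_exists aL aR : 0 <= aL -> 0 <= aR -> 1 < sqrt (aL * aR) * B ->
  exists t, theta_spec B k aL aR t.
Proof.
  intros hL hR hth.
  apply theta_threshold_iff in hth as hAD; [| exact hL | exact hR].
  pose proof B_mul_sqrt_pos. pose proof B_div_sqrt_pos.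
  assert (0 < aL) by (destruct hL as [h | <-]; [exact h | nra]).
  assert (0 < aR) by (destruct hR as [h | <-]; [exact h | nra]).
  destruct (saturation_solution_exists (B * sqrt k * aR) (B / sqrt k * aL)) as [s [hs e]];
    [nra | nra | exact hAD |].
  exists (s, phi (B / sqrt k * aL * s)).
  assert (0 < phi (B / sqrt k * aL * s))
    by (apply phi_pos, Rmult_lt_0_compat; [apply Rmult_lt_0_compat |]; assumption).
  unfold theta_spec; simpl. repeat split; [exact hs | assumption | |].
  - unfold phi at 1 in e. lra.
  - unfold phi. ring.
Qed.

Lemma theta_spec_le aL aR aL' aR' t t' :
  0 <= aL -> 0 <= aR -> aL <= aL' -> aR <= aR' ->
  theta_spec B k aL aR t -> theta_spec B k aL' aR' t' -> le2 t t'.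
Proof.
  intros hL hR hLL hRR hs hs'.
  destruct (theta_spec_saturation _ _ _ hL hR hs) as (a1 & a2 & _ & _ & e1 & e2).
  destruct (theta_spec_saturation aL' aR' t' ltac:(lra) ltac:(lra) hs')
    as (b1 & b2 & _ & _ & f1 & f2).
  pose proof B_mul_sqrt_pos. pose proof B_div_sqrt_pos.
  assert (fst t <= fst t').
  { apply (saturation_solution_le (B * sqrt k * aR) (B / sqrt k * aL)
      (B * sqrt k * aR') (B / sqrt k * aL')); try nra; [apply hs | apply hs']. }
  split; [assumption |].
  rewrite <- e2, <- f2. apply phi_le.
  destruct hs as [ht _].
  apply Rmult_le_compat; [nra | lra | | assumption].
  apply Rmult_le_compat_l; lra.
Qed.

Lemma theta_cases aL aR : 0 <= aL -> 0 <= aR ->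
  (sqrt (aL * aR) * B <= 1 /\ theta B k aL aR = (0, 0)) \/
  (1 < sqrt (aL * aR) * B /\ theta_spec B k aL aR (theta B k aL aR)).
Proof.
  intros hL hR. unfold theta.
  destruct (Rle_dec (sqrt (aL * aR) * B) 1) as [h | h]; [left; auto | right].
  split; [lra |]. apply epsilon_spec, theta_spec_exists; [exact hL | exact hR | lra].
Qed.

Lemma theta_solves aL aR : 0 <= aL -> 0 <= aR ->
  0 <= fst (theta B k aL aR) < 1 /\ 0 <= snd (theta B k aL aR) < 1 /\
  exp (- (B * sqrt k * aR * snd (theta B k aL aR))) = 1 - fst (theta B k aL aR) /\
  exp (- ((B / sqrt k) * aL * fst (theta B k aL aR))) = 1 - snd (theta B k aL aR).
Proof.
  intros hL hR. destruct (theta_cases aL aR hL hR) as [[_ e] | [_ s]].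
  - rewrite e; simpl. rewrite !Rmult_0_r, Ropp_0, exp_0. lra.
  - destruct (theta_spec_saturation _ _ _ hL hR s) as (_ & _ & h1 & h2 & _).
    destruct s as (s1 & s2 & e1 & e2). lra.
Qed.

Lemma theta_mono aL aR aL' aR' : 0 <= aL -> 0 <= aR -> aL <= aL' -> aR <= aR' ->
  le2 (theta B k aL aR) (theta B k aL' aR').
Proof.
  intros hL hR hLL hRR.
  destruct (theta_solves aL' aR' ltac:(lra) ltac:(lra)) as (t1 & t2 & _).
  destruct (theta_cases aL aR hL hR) as [[_ e] | [h s]].
  - rewrite e. split; simpl; lra.
  - destruct (theta_cases aL' aR' ltac:(lra) ltac:(lra)) as [[h' _] | [_ s']].
    + assert (sqrt (aL * aR) <= sqrt (aL' * aR')) by (apply sqrt_le_1_alt; nra). nra.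
    + exact (theta_spec_le _ _ _ _ _ _ hL hR hLL hRR s s').
Qed.

Lemma theta_of_spec aL aR t : 0 <= aL -> 0 <= aR ->
  theta_spec B k aL aR t -> theta B k aL aR = t.
Proof.
  intros hL hR hs. destruct (theta_cases aL aR hL hR) as [[h _] | [_ s]].
  - pose proof (theta_spec_threshold aL aR t hL hR hs). lra.
  - destruct (theta_spec_le _ _ _ _ _ _ hL hR (Rle_refl _) (Rle_refl _) s hs).
    destruct (theta_spec_le _ _ _ _ _ _ hL hR (Rle_refl _) (Rle_refl _) hs s).
    destruct (theta B k aL aR), t; simpl in *. f_equal; lra.
Qed.

(* [step_rel a (F a)] holds on the unit square; unlike [F], [step_rel] is continuous,
   so it passes to the limit along orbits. *)
Definition step_rel (a b : R * R) :=
  fst a * exp (- (B * sqrt k * (2 * snd b - 1))) = fst a - 2 * fst b + 1 /\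
  snd a * exp (- (B / sqrt k * (2 * fst b - 1))) = snd a - 2 * snd b + 1.

Definition fixed_eq (q : R * R) := step_rel q q.

Lemma F_range a : in_unit_square a -> le2 (1/2, 1/2) (F B k a) /\ le2 (F B k a) (1, 1).
Proof.
  destruct a as [aL aR]. intros [[hL1 hL2] [hR1 hR2]]. simpl in *.
  destruct (theta_solves aL aR hL1 hR1) as (t1 & t2 & _).
  unfold F, le2; simpl. repeat split; nra.
Qed.

Lemma F_in_unit_square a : in_unit_square a -> in_unit_square (F B k a).
Proof. intros h. destruct (F_range a h) as [[h1 h2] [h3 h4]]. split; simpl in *; lra. Qed.

Lemma iter_F_in_unit_square a t : in_unit_square a -> in_unit_square (Nat.iter t (F B k) a).
Proof. intros h. induction t as [| t IH]; [exact h | exact (F_in_unit_square _ IH)]. Qed.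

Lemma F_step_rel a : in_unit_square a -> step_rel a (F B k a).
Proof.
  destruct a as [aL aR]. intros [[hL1 _] [hR1 _]]. simpl in *.
  destruct (theta_solves aL aR hL1 hR1) as (_ & _ & e1 & e2).
  unfold step_rel, F; simpl. set (t := theta B k aL aR) in *. split.
  - replace (2 * ((1 + snd t * aR) / 2) - 1) with (aR * snd t) by field.
    rewrite <- Rmult_assoc, e1. field.
  - replace (2 * ((1 + fst t * aL) / 2) - 1) with (aL * fst t) by field.
    rewrite <- Rmult_assoc, e2. field.
Qed.

Lemma F_mono a b : in_unit_square a -> in_unit_square b -> le2 a b -> le2 (F B k a) (F B k b).
Proof.
  destruct a as [aL aR], b as [bL bR].
  intros [[a1 a2] [a3 a4]] [[b1 b2] [b3 b4]] [hL hR]. simpl in *.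
  destruct (theta_mono aL aR bL bR a1 a3 hL hR) as [tL tR].
  destruct (theta_solves aL aR a1 a3) as (s1 & s2 & _).
  unfold F; split; simpl; apply Rmult_le_compat_r; try lra;
    apply Rplus_le_compat_l, Rmult_le_compat; lra.
Qed.

Lemma orbit_limit_fixed_eq a p : in_unit_square a ->
  cv2 (fun t => Nat.iter t (F B k) a) p -> fixed_eq p.
Proof.
  intros ha [h1 h2].
  assert (hstep : forall t, step_rel (Nat.iter t (F B k) a) (Nat.iter (S t) (F B k) a))
    by (intro t; apply F_step_rel, iter_F_in_unit_square, ha).
  split.
  - exact (step_eq_limit _ _ _ _ _ h1 h2 (fun t => proj1 (hstep t))).
  - exact (step_eq_limit _ _ _ _ _ h2 h1 (fun t => proj2 (hstep t))).
Qed.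

Lemma fixed_eq_cases q : fixed_eq q -> le2 (1/2, 1/2) q -> le2 q (1, 1) ->
  q = (1/2, 1/2) \/ in_upper_open_square q.
Proof.
  destruct q as [x y]. intros [e1 e2] [h1 h2] [h3 h4]. simpl in *.
  pose proof B_mul_sqrt_pos. pose proof B_div_sqrt_pos.
  destruct (Req_dec y (1/2)) as [-> | hy].
  - replace (- (B * sqrt k * (2 * (1/2) - 1))) with 0 in e1 by field.
    rewrite exp_0 in e1. left. f_equal. lra.
  - right. assert (1/2 < y) by (destruct h2; [assumption | exfalso; apply hy; auto]).
    pose proof (exp_pos (- (B * sqrt k * (2 * y - 1)))).
    pose proof (exp_pos (- (B / sqrt k * (2 * x - 1)))).
    assert (exp (- (B * sqrt k * (2 * y - 1))) < 1) by (apply exp_lt_1; nra).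
    assert (1/2 < x) by nra.
    assert (exp (- (B / sqrt k * (2 * x - 1))) < 1) by (apply exp_lt_1; nra).
    split; split; simpl; nra.
Qed.

Lemma fixed_eq_F q : in_upper_open_square q -> fixed_eq q -> F B k q = q.
Proof.
  destruct q as [x y]. intros [hx hy] [e1 e2]. simpl in *.
  pose proof (sqrt_lt_R0 k k_pos).
  assert (hth : theta B k x y = (2 - 1/x, 2 - 1/y)).
  { apply theta_of_spec; [lra | lra |]. unfold theta_spec; simpl. repeat split.
    - apply Rmult_lt_reg_r with x; [lra |]. field_simplify; lra.
    - apply Rmult_lt_reg_r with y; [lra |]. field_simplify; lra.
    - replace (B * sqrt k * y * (2 - 1 / y)) with (B * sqrt k * (2 * y - 1))
        by (field; lra).
      apply Rmult_eq_reg_l with x; [rewrite e1; field |]; lra.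
    - replace (B / sqrt k * x * (2 - 1 / x)) with (B / sqrt k * (2 * x - 1))
        by (field; lra).
      apply Rmult_eq_reg_l with y; [rewrite e2; field |]; lra. }
  unfold F; simpl. rewrite hth; simpl. f_equal; field; lra.
Qed.

Lemma fixed_eq_tanh_half q : in_upper_open_square q -> fixed_eq q ->
  2 * fst q - 1 = tanh_half (B * sqrt k * (2 * snd q - 1)) /\
  2 * snd q - 1 = tanh_half (B / sqrt k * (2 * fst q - 1)).
Proof.
  destruct q as [x y]. intros [hx hy] [e1 e2]. simpl in *.
  assert (key : forall u z, u * exp (- z) = u - 2 * u + 1 -> 2 * u - 1 = tanh_half z).
  { intros u z e. unfold tanh_half. pose proof (exp_pos z).
    assert (exp (- z) * exp z = 1) by (rewrite <- exp_plus, Rplus_opp_l; apply exp_0).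
    apply Rmult_eq_reg_r with (exp z + 1); [| lra].
    unfold Rdiv. rewrite Rmult_assoc, Rinv_l by lra.
    assert (u * exp (- z) * exp z = (u - 2 * u + 1) * exp z) by (rewrite e; reflexivity).
    nra. }
  split; apply key; assumption.
Qed.

Lemma fixed_eq_unique q q' : in_upper_open_square q -> fixed_eq q ->
  in_upper_open_square q' -> fixed_eq q' -> q = q'.
Proof.
  intros hq e hq' e'.
  destruct (fixed_eq_tanh_half q hq e) as [x1 y1].
  destruct (fixed_eq_tanh_half q' hq' e') as [x2 y2].
  pose proof (ratio_decreasing_scaled_twice tanh_half _ _ B_mul_sqrt_pos B_div_sqrt_pos
    tanh_half_ratio_decreasing tanh_half_pos_increasing) as hdec.
  destruct hq as [hq1 _], hq' as [hq1' _].
  assert (hx : 2 * fst q - 1 = 2 * fst q' - 1).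
  { apply (ratio_decreasing_fixed_unique _ _ _ hdec); [lra | lra | |]; cbv beta;
      [rewrite <- y1 | rewrite <- y2]; symmetry; assumption. }
  rewrite hx in y1. destruct q, q'; simpl in *. f_equal; lra.
Qed.

Lemma fixed_eq_B_le_2 q : B <= 2 -> in_upper_open_square q -> ~ fixed_eq q.
Proof.
  intros hB hq e. destruct (fixed_eq_tanh_half q hq e) as [x1 y1].
  pose proof B_mul_sqrt_pos. pose proof B_div_sqrt_pos. pose proof B_mul_div_sqrt.
  destruct hq as [hq1 hq2].
  set (x := 2 * fst q - 1) in *. set (y := 2 * snd q - 1) in *.
  assert (0 < x) by (unfold x; lra). assert (0 < y) by (unfold y; lra).
  set (c := B * sqrt k) in *. set (d := B / sqrt k) in *.
  assert (x < c * y / 2) by (rewrite x1; apply tanh_half_lt_half; nra).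
  assert (y < d * x / 2) by (rewrite y1; apply tanh_half_lt_half; nra).
  assert (x < c * d * x / 4) by nra.
  assert (B * B <= 4) by nra. nra.
Qed.

Lemma sqrt_half_mul_half : sqrt (1/2 * (1/2)) = 1/2.
Proof. apply sqrt_square. lra. Qed.

Lemma F_half_fixed : B <= 2 -> F B k (1/2, 1/2) = (1/2, 1/2).
Proof.
  intros hB. unfold F, theta; simpl. rewrite sqrt_half_mul_half.
  destruct (Rle_dec (1/2 * B) 1); [simpl; f_equal; field | lra].
Qed.

Lemma F_half_gt : 2 < B -> 1/2 < fst (F B k (1/2, 1/2)).
Proof.
  intros hB.
  destruct (theta_cases (1/2) (1/2) ltac:(lra) ltac:(lra)) as [[h _] | [_ [s _]]].
  - rewrite sqrt_half_mul_half in h. lra.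
  - unfold F; simpl. nra.
Qed.

Lemma fixed_eq_exp_iff q : 0 < fst q -> 0 < snd q ->
  (fixed_eq q <-> exp (B * sqrt k * (1 - 2 * snd q)) = (1 - fst q) / fst q /\
                  exp ((B / sqrt k) * (1 - 2 * fst q)) = (1 - snd q) / snd q).
Proof.
  intros h1 h2. unfold fixed_eq, step_rel.
  replace (B * sqrt k * (1 - 2 * snd q)) with (- (B * sqrt k * (2 * snd q - 1))) by ring.
  replace ((B / sqrt k) * (1 - 2 * fst q)) with (- (B / sqrt k * (2 * fst q - 1))) by ring.
  split; intros [a b]; split.
  - apply Rmult_eq_reg_l with (fst q); [rewrite a; field |]; lra.
  - apply Rmult_eq_reg_l with (snd q); [rewrite b; field |]; lra.
  - rewrite a. field. lra.
  - rewrite b. field. lra.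
Qed.

Lemma F_mono_upper_square a b : le2 (1/2, 1/2) a -> le2 a b -> le2 b (1, 1) ->
  le2 (F B k a) (F B k b).
Proof.
  intros ha hab hb. apply F_mono; [| | exact hab]; apply upper_square_in_unit; try assumption.
  - exact (le2_trans _ _ _ hab hb).
  - exact (le2_trans _ _ _ ha hab).
Qed.

Lemma F_maps_upper_square a : le2 (1/2, 1/2) a -> le2 a (1, 1) ->
  le2 (1/2, 1/2) (F B k a) /\ le2 (F B k a) (1, 1).
Proof. intros h1 h2. apply F_range, upper_square_in_unit; assumption. Qed.

Lemma orbit_limit_fixed_eq_upper a p : le2 (1/2, 1/2) a -> le2 a (1, 1) ->
  cv2 (fun t => Nat.iter t (F B k) a) p -> fixed_eq p.
Proof. intros h1 h2. apply orbit_limit_fixed_eq, upper_square_in_unit; assumption. Qed.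

Lemma fixed_eq_solution_above_F_half :
  exists l, le2 (F B k (1/2, 1/2)) l /\ le2 l (1, 1) /\ fixed_eq l.
Proof.
  destruct (orbit_limits (F B k) _ _ half_le_one F_mono_upper_square F_maps_upper_square
              fixed_eq orbit_limit_fixed_eq_upper) as (l & u & _ & _ & hl & hlu & hu & el & _).
  exists l. split; [exact hl |]. split; [exact (le2_trans _ _ _ hlu hu) | exact el].
Qed.

(* (1/2, 1/2) always solves fixed_eq; the box starting at F (1/2, 1/2) excludes it
   when B > 2. *)
Definition trapping_fixed_point (p : R * R) :=
  F B k p = p /\ le2 (F B k (1/2, 1/2)) p /\ le2 p (1, 1) /\
  forall q, le2 (F B k (1/2, 1/2)) q -> le2 q (1, 1) -> fixed_eq q -> q = p.

Lemma trapping_fixed_point_attracts p : trapping_fixed_point p ->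
  (in_unit_square p /\ F B k p = p /\
   forall q, in_unit_square q -> F B k q = q -> q = p) /\
  (forall a, in_unit_square a ->
     Un_cv (fun t => fst (Nat.iter t (F B k) a)) (fst p) /\
     Un_cv (fun t => snd (Nat.iter t (F B k) a)) (snd p)).
Proof.
  intros (hfix & hlo & hhi & huniq).
  pose proof half_in_unit_square as hhalf.
  split; [split; [| split] |].
  - apply upper_square_in_unit; [| exact hhi].
    exact (le2_trans _ _ _ (proj1 (F_range _ hhalf)) hlo).
  - exact hfix.
  - intros q hq hfq.
    assert (hq1 : le2 (1/2, 1/2) q) by (rewrite <- hfq; apply F_range, hq).
    assert (hq2 : le2 q (1, 1)) by (rewrite <- hfq; apply F_range, hq).
    apply huniq; [| exact hq2 |].
    + rewrite <- hfq. exact (F_mono _ _ hhalf hq hq1).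
    + pose proof (F_step_rel q hq) as h. rewrite hfq in h. exact h.
  - intros a ha.
    destruct (F_range a ha) as [ha1 ha2].
    destruct (cv2_iter_succ (F B k) a p
      (iter_cv_of_unique (F B k) _ _ half_le_one F_mono_upper_square F_maps_upper_square
         fixed_eq orbit_limit_fixed_eq_upper p huniq (F B k a) ha1 ha2)) as [h1 h2].
    split; apply is_lim_seq_Reals; assumption.
Qed.

Lemma half_trapping : B < 2 -> trapping_fixed_point (1/2, 1/2).
Proof.
  intros hB. unfold trapping_fixed_point. rewrite F_half_fixed by lra.
  split; [reflexivity |]. split; [apply le2_refl |]. split; [exact half_le_one |].
  intros q hq1 hq2 e. destruct (fixed_eq_cases q e hq1 hq2) as [-> | hq]; [reflexivity |].
  exfalso. exact (fixed_eq_B_le_2 q ltac:(lra) hq e).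
Qed.

Lemma fixed_eq_above_F_half q : 2 < B ->
  le2 (F B k (1/2, 1/2)) q -> le2 q (1, 1) -> fixed_eq q -> in_upper_open_square q.
Proof.
  intros hB hq1 hq2 e.
  pose proof half_in_unit_square as hhalf.
  pose proof (F_half_gt hB).
  destruct (fixed_eq_cases q e (le2_trans _ _ _ (proj1 (F_range _ hhalf)) hq1) hq2)
    as [-> | hq]; [| exact hq].
  destruct hq1 as [h _]. cbn [fst] in h. lra.
Qed.

Lemma upper_trapping_exists : 2 < B ->
  exists p, in_upper_open_square p /\ fixed_eq p /\ trapping_fixed_point p.
Proof.
  intros hB. destruct fixed_eq_solution_above_F_half as (p & hp1 & hp2 & e).
  pose proof (fixed_eq_above_F_half p hB hp1 hp2 e) as hp.
  exists p. split; [exact hp |]. split; [exact e |].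
  split; [exact (fixed_eq_F p hp e) |]. split; [exact hp1 |]. split; [exact hp2 |].
  intros q hq1 hq2 eq.
  exact (fixed_eq_unique q p (fixed_eq_above_F_half q hB hq1 hq2 eq) eq hp e).
Qed.

End Dynamics.

Theorem lemma10 (k B : R) (hk : 1 <= k) (hB : 0 < B) (hB2 : B <> 2) :
  exists p : R * R,
    (in_unit_square p /\ F B k p = p /\
     forall q : R * R, in_unit_square q -> F B k q = q -> q = p) /\
    (B < 2 -> p = (1/2, 1/2)) /\
    (2 < B ->
       (1/2 < fst p < 1 /\ 1/2 < snd p < 1 /\
        exp (B * sqrt k * (1 - 2 * snd p)) = (1 - fst p) / fst p /\
        exp ((B / sqrt k) * (1 - 2 * fst p)) = (1 - snd p) / snd p) /\
       (forall q : R * R,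
          1/2 < fst q < 1 -> 1/2 < snd q < 1 ->
          exp (B * sqrt k * (1 - 2 * snd q)) = (1 - fst q) / fst q ->
          exp ((B / sqrt k) * (1 - 2 * fst q)) = (1 - snd q) / snd q ->
          q = p)) /\
    (forall a : R * R, in_unit_square a ->
       Un_cv (fun t => fst (Nat.iter t (F B k) a)) (fst p) /\
       Un_cv (fun t => snd (Nat.iter t (F B k) a)) (snd p)).
Proof.
  assert (hk0 : 0 < k) by lra.
  destruct (Rtotal_order B 2) as [hlt | [heq | hgt]]; [| contradiction |].
  - destruct (trapping_fixed_point_attracts k B hk0 hB _ (half_trapping k B hk0 hB hlt))
      as [hfix hcv].
    exists (1/2, 1/2). split; [exact hfix |]. split; [reflexivity |].
    split; [intros; lra | exact hcv].
  - destruct (upper_trapping_exists k B hk0 hB hgt) as (p & hp & e & htrap).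
    destruct (trapping_fixed_point_attracts k B hk0 hB p htrap) as [hfix hcv].
    exists p. split; [exact hfix |]. split; [intros; lra |]. split; [| exact hcv].
    intros _. destruct hp as [hpL hpR]. split.
    + split; [exact hpL |]. split; [exact hpR |].
      apply (fixed_eq_exp_iff k B); [lra | lra | exact e].
    + intros q hqL hqR e1 e2.
      apply (fixed_eq_unique k B hk0 hB); [split; assumption | | split; assumption | exact e].
      apply (fixed_eq_exp_iff k B); [lra | lra | split; assumption].
Qed.
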